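(* Let $\mathcal{D}$ be a relational database (in the setting described in the context), let $R$ be a (binary) relationship variable and let $\mathbf{R}$ be a set of relationship variables. Let $\mathit{Vars}$ be a set of random variables that contains neither $R$ nor any of the relationship attribute variables $\mathit{2Atts}(R)$ of $R$. Let $\mathbb{X}_1,\ldots,\mathbb{X}_l$ ($l \ge 0$) be the first-order variables that occur as arguments of $R$ but do not occur in $\mathit{Vars}$. Then \begin{align*} &\mathit{ct}(\mathit{Vars} \cup \mathit{1Atts}(R)\mid \mathbf{R} = \mathrm{T}, R = \mathrm{F}) \\ &= \mathit{ct}(\mathit{Vars}\mid \mathbf{R} = \mathrm{T}, R = * ) \times \mathit{ct}(\mathbb{X}_1) \times \cdots \times \mathit{ct}(\mathbb{X}_l) \;-\; \mathit{ct}(\mathit{Vars} \cup \mathit{1Atts}(R)\mid \mathbf{R} = \mathrm{T}, R = \mathrm{T}), \end{align*} where $\times$ and $-$ are the contingency-table cross product and count difference. If $l=0$, the equation holds without the cross-product terms $\mathit{ct}(\mathbb{X}_i)$. Here every first-order variable is assumed to have at least one descriptive (unary) attribute.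
   Context: A population is a finite set of individuals. A functor $f:\mathcal{P}_1,\ldots,\mathcal{P}_a\to V_f$ maps tuples of individuals to a finite range $V_f$; if $V_f=\{\mathrm{T},\mathrm{F}\}$ it is a predicate, and a predicate with two arguments is a (binary) relationship; other functors are attributes. A random variable is $f(\mathbb{X}_1,\ldots,\mathbb{X}_a)$ with each $\mathbb{X}_i$ a first-order variable ranging over a population. A database instance determines the value of every functor on every tuple of individuals; for a relationship $R(\mathbb{X},\mathbb{Y})$, its relationship attributes (collectively $\mathit{2Atts}(R)$, e.g. $\mathit{salary}(\mathbb{X},\mathbb{Y})$) take the reserved value $n/a$ exactly on pairs where $R=\mathrm{F}$. For a first-order variable $\mathbb{X}$, $\mathit{1Atts}(\mathbb{X})$ is the set of unary attribute variables of $\mathbb{X}$; for a relationship (or set of relationships) $R$, $\mathit{1Atts}(R)$ is the union of $\mathit{1Atts}(\mathbb{X})$ over the first-order variables $\mathbb{X}$ occurring in $R$. A first-order variable occurs in a set of random variables if it is an argument of one of them. A query is a set of (variable = value) pairs; its result set is the set of instantiations of the first-order variables occurring in the query by individuals of their populations that make all pairs true in the database, and its count is the size of the result set. The value ''$*$'' (''don't care'') for a variable means the variable is not constrained and is omitted from the query (so its first-order variables are not instantiated on its account). The contingency table $\mathit{ct}(V_1,\ldots,V_n)$ has one row per assignment of values to $V_1,\ldots,V_n$ with a count column giving the count of the corresponding query; $\mathit{ct}(\mathbb{X})$ denotes $\mathit{ct}(\mathit{1Atts}(\mathbb{X}))$. The conditional contingency table $\mathit{ct}(V_1,\ldots,V_k\mid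 V_{k+1}=v_{k+1},\ldots,V_{k+m}=v_{k+m})$ has columns $V_1,\ldots,V_k$, and each row's count is the count of the query consisting of that row's assignment together with the conditions. $\mathbf{R}=\mathrm{T}$ means every relationship in $\mathbf{R}$ equals $\mathrm{T}$. Rows with count $0$ are omitted. Cross product: $\mathit{ct}_1(\mathbf{U})\times \mathit{ct}_2(\mathbf{V})$ has as rows all pairs of rows (over disjoint column sets), with count equal to the product of counts. Count difference $\mathit{ct}_1(\mathbf{V})-\mathit{ct}_2(\mathbf{V})$ (same columns): each row's count is its count in $\mathit{ct}_1$ minus its count in $\mathit{ct}_2$, a missing row counting as $0$; it is defined only when the rows of $\mathit{ct}_2$ are among those of $\mathit{ct}_1$ with counts no larger.
   Formalization: Each first-order variable $\mathbb{X}$ of R occurring in Vars is assumed to have $\mathit{1Atts}(\mathbb{X})$ contained in Vars, and each first-order variable of R occurring in $\mathbf{R}$ also occurs in Vars. The statement above fails without it. *)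

From mathcomp Require Import all_boot.
Set Implicit Arguments. Unset Strict Implicit. Unset Printing Implicit Defensive.

(*   FOV      : first-order variables; FOV X ranges over members (popOf X)   *)
(*   Val      : a common type containing all values; range f = V_f          *)
(*   vT, vF   : the truth values T and F; vNA the reserved value n/a         *)
(*   relAtt r g : g is a relationship attribute (functor) of the relationship *)
(*              functor r                                                    *)
Record schema := Schema {
  Ind : finType;
  Pop : finType;
  members : Pop -> {set Ind};
  FOV : finType;
  popOf : FOV -> Pop;
  Fn : finType;
  Val : finType;
  fdom : Fn -> seq Pop;
  range : Fn -> {set Val};
  vT : Val; vF : Val; vNA : Val;
  relAtt : Fn -> Fn -> bool
}.

Section Database.
Variable S : schema.

Definition isPred (f : Fn S) : bool := range f == [set vT S; vF S].
Definition isRel (f : Fn S) : bool := isPred f && (size (fdom f) == 2).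

(* A random variable f(X1,...,Xa). *)
Definition rv := (Fn S * seq (FOV S))%type.
Definition wf_rv (v : rv) : bool := map (@popOf S) v.2 == fdom v.1.

Definition typed (f : Fn S) (t : seq (Ind S)) : bool :=
  all2 (fun i p => i \in members p) t (fdom f).

Definition wf_schema : Prop :=
  [/\ vT S != vF S, vNA S != vT S, vNA S != vF S &
      forall r g, relAtt r g ->
        [/\ isRel r, fdom g = fdom r, ~~ isPred g & vNA S \in range g]].

Definition valid_db (db : Fn S -> seq (Ind S) -> Val S) : Prop :=
  (forall f t, typed f t -> db f t \in range f) /\
  (forall r g t, relAtt r g -> typed r t ->
      (db g t == vNA S) = (db r t == vF S)).

Definition oneAtts (X : FOV S) : seq rv :=
  [seq (f, [:: X]) | f <- enum (Fn S) &
     (fdom f == [:: popOf X]) && ~~ isPred f].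

Definition oneAttsR (R : rv) : seq rv := flatten [seq oneAtts X | X <- R.2].

Definition twoAtts (R : rv) : seq rv :=
  [seq (g, R.2) | g <- enum (Fn S) & relAtt R.1 g].

Definition occ (vs : seq rv) : seq (FOV S) := flatten (map snd vs).

Variable db : Fn S -> seq (Ind S) -> Val S.

(* Partial instantiations of the first-order variables. *)
Definition grounding := {ffun FOV S -> option (Ind S)}.

Definition eval_rv (g : grounding) (v : rv) : Val S :=
  db v.1 (pmap (fun X => g X) v.2).

(* A query is a list of (variable = value) pairs; its count is the number of *)
(* instantiations of the first-order variables occurring in the query by     *)
(* individuals of their populations that make all pairs true.                *)
Definition query := seq (rv * Val S).

Definition qcount (q : query) : nat :=
  #|[set g : grounding |
      [forall X, if X \in occ (map fst q)
                 then (if g X is Some i then i \in members (popOf X) else false)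
                 else g X == None]
      && all (fun p => eval_rv g p.1 == p.2) q]|.

(* Contingency tables: a column list and a count for every row. A row is an *)
(* assignment of values to the columns, represented by a total map          *)
(* rv -> Val (only its values on the columns matter); rows with count 0     *)
(* are the omitted ones.                                                    *)
Record table := Table { tcols : seq rv; tcnt : (rv -> Val S) -> nat }.

Definition ct (cols : seq rv) (cond : query) : table :=
  Table cols (fun a => qcount ([seq (v, a v) | v <- cols] ++ cond)).

Definition ctX (X : FOV S) : table := ct (oneAtts X) [::].

Definition ct_cross (t1 t2 : table) : table :=
  Table (tcols t1 ++ tcols t2) (fun a => tcnt t1 a * tcnt t2 a).
Definition cross_defined (t1 t2 : table) : Prop :=
  forall v, v \in tcols t1 -> v \notin tcols t2.

Definition ct_diff (t1 t2 : table) : table :=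
  Table (tcols t1) (fun a => tcnt t1 a - tcnt t2 a).
Definition diff_defined (t1 t2 : table) : Prop :=
  tcols t1 =i tcols t2 /\ forall a, tcnt t2 a <= tcnt t1 a.

Definition table_eq (t1 t2 : table) : Prop :=
  tcols t1 =i tcols t2 /\ forall a, tcnt t1 a = tcnt t2 a.

Definition cross_list (t : table) (ts : seq table) : table :=
  foldl ct_cross t ts.
Fixpoint cross_list_defined (t : table) (ts : seq table) : Prop :=
  match ts with
  | [::] => True
  | t' :: ts' => cross_defined t t' /\ cross_list_defined (ct_cross t t') ts'
  end.

Definition condT (Rs : seq rv) : query := [seq (r, vT S) | r <- Rs].

End Database.

From mathcomp Require Import all_boot.
Set Implicit Arguments. Unset Strict Implicit. Unset Printing Implicit Defensive.

(* Groundings satisfying every condition except the one on R give R the value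
   T or F, since R is a predicate applied to a well-typed tuple; hence the
   R = F count is the R-unconstrained count minus the R = T count.  Without the
   condition on R, each first-order variable X_i of R not occurring in Vars
   (hence, by hypothesis, not in the relationships Rs either) is constrained
   only by its own unary attributes, and groundings are determined
   independently on disjoint sets of variables: the unconstrained count
   factors as ct(Vars | Rs = T) times one ct(X_i) per X_i.  The unary
   attributes of the other variables of R are already columns of Vars. *)

Section PartialFunctions.
Variables (T U : finType) (ok : T -> U -> bool).
Implicit Types (D E : pred T) (g h : {ffun T -> option U}) (P Q : pred {ffun T -> option U}).

Definition pfun_on D g : bool :=
  [forall x, if D x then (if g x is Some u then ok x u else false) else g x == None].

Definition local D P := forall g h, (forall x, D x -> g x = h x) -> P g = P h.

Definition restrict D g := [ffun x => if D x then g x else None].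

Definition glue D g h := [ffun x => if D x then g x else h x].

Lemma eq_pfun_on D D' g : D =1 D' -> pfun_on D g = pfun_on D' g.
Proof. by move=> eqD; apply: eq_forallb => x; rewrite eqD. Qed.

Lemma pfun_on_inj D g h :
  pfun_on D g -> pfun_on D h -> (forall x, D x -> g x = h x) -> g = h.
Proof.
move=> /forallP gD /forallP hD eq_gh; apply/ffunP => x.
by have := gD x; have := hD x; case: ifP (eq_gh x) => [_ -> //|_ _ /eqP-> /eqP->].
Qed.

Lemma pfun_on_restrict D D' g :
  (forall x, D x -> D' x) -> pfun_on D' g -> pfun_on D (restrict D g).
Proof.
move=> subD /forallP gD'; apply/forallP => x; rewrite ffunE.
by case Dx: (D x) => //; have := gD' x; rewrite (subD x Dx).
Qed.

Lemma pfun_on_glue D E g h :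
  (forall x, D x -> ~~ E x) -> pfun_on D g -> pfun_on E h ->
  pfun_on (predU D E) (glue D g h).
Proof.
move=> disDE /forallP gD /forallP hE; apply/forallP => x; rewrite ffunE /=.
by case Dx: (D x); [have := gD x | have := hE x]; rewrite ?Dx.
Qed.

Lemma local_sub D D' P : (forall x, D x -> D' x) -> local D P -> local D' P.
Proof. by move=> subD locP g h eq_gh; apply: locP => x /subD; apply: eq_gh. Qed.

Lemma card_pfun_on_predU D E P Q :
  (forall x, D x -> ~~ E x) -> local D P -> local E Q ->
  #|[set g | pfun_on (predU D E) g && P g && Q g]| =
  #|[set g | pfun_on D g && P g]| * #|[set g | pfun_on E g && Q g]|.
Proof.
move=> disDE locP locQ; rewrite -cardsX.
pose parts g : {ffun T -> option U} * {ffun T -> option U} :=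
  (restrict D g, restrict E g).
have restrictE (F : pred T) g x : F x -> restrict F g x = g x by rewrite ffunE => ->.
have parts_inj : {in [set g | pfun_on (predU D E) g && P g && Q g] &, injective parts}.
  move=> g h; rewrite !inE => /andP[/andP[gDE _] _] /andP[/andP[hDE _] _] [eqD eqE].
  apply: pfun_on_inj gDE hDE _ => x /orP[] Fx.
    by rewrite -(restrictE D g x Fx) eqD restrictE.
  by rewrite -(restrictE E g x Fx) eqE restrictE.
rewrite -(card_in_imset parts_inj); apply: eq_card => -[g1 g2].
rewrite !inE; apply/imsetP/idP => [[g]|/andP[/andP[g1D Pg1] /andP[g2E Qg2]] /=].
  rewrite inE => /andP[/andP[gDE Pg] Qg] [-> ->].
  rewrite (pfun_on_restrict _ gDE) => [|x]; last by rewrite /= => ->.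
  rewrite (pfun_on_restrict _ gDE) => [|x]; last by rewrite /= orbC => ->.
  rewrite (locP (restrict D g) g) => [|x /restrictE //].
  by rewrite (locQ (restrict E g) g) => [|x /restrictE //]; rewrite Pg Qg.
have gl_DE := pfun_on_glue disDE g1D g2E.
have gl_E x : E x -> glue D g1 g2 x = g2 x.
  by move=> Ex; rewrite ffunE; case: ifP => // /disDE; rewrite Ex.
exists (glue D g1 g2).
  rewrite inE gl_DE (locP _ g1) => [|x Dx]; last by rewrite ffunE Dx.
  by rewrite (locQ _ g2) => [|x /gl_E]; rewrite ?Pg1 ?Qg2.
congr pair.
  apply: (pfun_on_inj g1D) => [|x Dx]; last by rewrite restrictE // ffunE Dx.
  by apply: pfun_on_restrict gl_DE => x /= ->.
apply: (pfun_on_inj g2E) => [|x Ex]; last by rewrite restrictE // gl_E.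
by apply: pfun_on_restrict gl_DE => x /= ->; rewrite orbT.
Qed.

Lemma card_pfun_on_cat D P (Q : T -> pred {ffun T -> option U}) (s : seq T) :
  uniq s -> (forall x, x \in s -> ~~ D x) ->
  local D P -> (forall y, local (pred1 y) (Q y)) ->
  #|[set g | pfun_on (fun x => D x || (x \in s)) g && P g && all (Q^~ g) s]| =
  #|[set g | pfun_on D g && P g]| * \prod_(y <- s) #|[set g | pfun_on (pred1 y) g && Q y g]|.
Proof.
elim: s D P => [|y s IH] D P /=.
  move=> _ _ _ _; rewrite big_nil muln1; apply: eq_card => g; rewrite !inE andbT.
  by rewrite (@eq_pfun_on _ D) // => x; rewrite orbF.
move=> /andP[ys uniq_s] sD locP locQ.
pose Dy := predU D (pred1 y).
have locDy : local Dy (fun g => P g && Q y g).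
  move=> g h eq_gh; congr andb.
    by apply: (local_sub _ locP) eq_gh => x /= ->.
  by apply: (local_sub _ (locQ y)) eq_gh => x /= ->; rewrite orbT.
have sDy x : x \in s -> ~~ Dy x.
  move=> xs; rewrite /= negb_or sD ?inE ?xs ?orbT //=.
  by apply: contraNneq ys => <-.
rewrite big_cons mulnA -card_pfun_on_predU //; last first.
  by move=> x Dx; apply: contraTN Dx => /eqP ->; apply: sD; rewrite inE eqxx.
have -> : #|[set g | pfun_on Dy g && P g && Q y g]| =
          #|[set g | pfun_on Dy g && (P g && Q y g)]|.
  by apply: eq_card => g; rewrite !inE andbA.
rewrite -IH //; apply: eq_card => g; rewrite !inE -!andbA; congr andb.
by apply: eq_pfun_on => x; rewrite /= inE orbA.
Qed.

End PartialFunctions.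

Lemma card_two_valued (T : finType) (V : eqType) (A : {set T}) (f : T -> V) t u :
  t != u -> {in A, forall x, (f x == t) || (f x == u)} ->
  #|[set x in A | f x == t]| + #|[set x in A | f x == u]| = #|A|.
Proof.
move=> tu fA; rewrite -(cardsID [set x | f x == t] A); congr addn.
  by apply: eq_card => x; rewrite !inE.
apply: eq_card => x; rewrite !inE andbC; case xA: (x \in A); rewrite ?andbT ?andbF //.
by case/orP: (fA x xA) => /eqP->; rewrite eqxx ?(negbTE tu) // eq_sym.
Qed.

Section Tables.
Variable S : schema.

Lemma tcnt_cross_list (t : table S) ts a :
  tcnt (cross_list t ts) a = tcnt t a * \prod_(t' <- ts) tcnt t' a.
Proof.
elim: ts t => [|t' ts IH] t /=; first by rewrite big_nil muln1.
by rewrite IH big_cons mulnA.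
Qed.

Lemma tcols_cross_list (t : table S) ts :
  tcols (cross_list t ts) = tcols t ++ flatten [seq tcols t' | t' <- ts].
Proof.
elim: ts t => [|t' ts IH] t /=; first by rewrite cats0.
by rewrite IH catA.
Qed.

End Tables.

Section Attributes.
Variable S : schema.
Implicit Types (X Z : FOV S) (vs : seq (rv S)).

Lemma occP vs Z : reflect (exists2 v, v \in vs & Z \in v.2) (Z \in occ vs).
Proof. exact: flatten_mapP. Qed.

Lemma occ_cat vs vs' : occ (vs ++ vs') = occ vs ++ occ vs'.
Proof. by rewrite /occ map_cat flatten_cat. Qed.

Lemma mem_oneAtts X v : v \in oneAtts X -> v.2 = [:: X].
Proof. by case/mapP=> f _ ->. Qed.

Lemma occ_oneAtts X Z : oneAtts X != [::] -> (Z \in occ (oneAtts X)) = (Z == X).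
Proof.
case E: (oneAtts X) => [//|v s] _; rewrite -E.
apply/occP/eqP => [[w /mem_oneAtts-> /[1!inE] /eqP //]|->].
have vX : v \in oneAtts X by rewrite E mem_head.
by exists v; rewrite // (mem_oneAtts vX) mem_head.
Qed.

Lemma occ_oneAttsR (R : rv S) Z :
  (forall X, oneAtts X != [::]) -> (Z \in occ (oneAttsR R)) = (Z \in R.2).
Proof.
move=> ne; apply/occP/idP => [[v /flatten_mapP[X XR vX]]|ZR].
  by rewrite (mem_oneAtts vX) inE => /eqP->.
have /occP[v vZ Zv] : Z \in occ (oneAtts Z) by rewrite occ_oneAtts.
by exists v => //; apply/flatten_mapP; exists Z.
Qed.

Lemma cross_list_defined_ctX db (t : table S) (Ys : seq (FOV S)) :
  uniq Ys -> (forall v Y, v \in tcols t -> Y \in Ys -> v \notin oneAtts Y) ->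
  cross_list_defined t [seq ctX db Y | Y <- Ys].
Proof.
elim: Ys t => [//|Y Ys IH] t /andP[YYs uYs] tYs; split.
  by move=> v vt; apply: tYs; rewrite ?mem_head.
apply: IH => // v Z; rewrite mem_cat => /orP[vt ZYs|vY ZYs].
  by apply: tYs; rewrite // inE ZYs orbT.
apply: contraNN YYs => vZ.
by move: (mem_oneAtts vY) (mem_oneAtts vZ) => -> [->].
Qed.

End Attributes.

Section Queries.
Variables (S : schema) (db : Fn S -> seq (Ind S) -> Val S).
Implicit Types (q : query S) (g : grounding S) (a : rv S -> Val S) (cols : seq (rv S)).

Definition in_pop (X : FOV S) (i : Ind S) : bool := i \in members (popOf X).

Local Notation grounds := (pfun_on in_pop).

Definition sat q g : bool := all (fun p => eval_rv db g p.1 == p.2) q.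

Definition row a cols : query S := [seq (v, a v) | v <- cols].

Lemma qcountE q :
  qcount db q = #|[set g | grounds (fun X => X \in occ (map fst q)) g && sat q g]|.
Proof. by []. Qed.

Lemma tcnt_ct cols cond a : tcnt (ct db cols cond) a = qcount db (row a cols ++ cond).
Proof. by []. Qed.

Lemma condT_row (Rs : seq (rv S)) : condT Rs = row (fun=> vT S) Rs.
Proof. by []. Qed.

Lemma map_fst_row a cols : map fst (row a cols) = cols.
Proof. by rewrite -map_comp map_id. Qed.

Lemma row_cat a cols cols' : row a (cols ++ cols') = row a cols ++ row a cols'.
Proof. exact: map_cat. Qed.

Lemma sat_cat q q' g : sat (q ++ q') g = sat q g && sat q' g.
Proof. exact: all_cat. Qed.

Lemma sat_rowE a cols g : sat (row a cols) g = all (fun v => eval_rv db g v == a v) cols.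
Proof. exact: all_map. Qed.

Lemma sat_row_flatten a (ss : seq (seq (rv S))) g :
  sat (row a (flatten ss)) g = all (fun s => sat (row a s) g) ss.
Proof. by elim: ss => //= s ss IH; rewrite row_cat sat_cat IH. Qed.

Lemma sat_local q : local (fun X => X \in occ (map fst q)) (sat q).
Proof.
move=> g h eq_gh; apply: eq_in_all => -[v b] vq /=; congr (_ == b).
rewrite /eval_rv (@eq_in_pmap _ _ _ (fun X => h X)) // => X Xv.
by apply: eq_gh; apply/occP; exists v => //; apply: map_f vq.
Qed.

Lemma typed_pmap_grounds (D : pred (FOV S)) g (v : rv S) :
  wf_rv v -> (forall X, X \in v.2 -> D X) -> grounds D g ->
  typed v.1 (pmap (fun X => g X) v.2).
Proof.
rewrite /typed /wf_rv => /eqP<- vD /forallP gD; elim: v.2 vD => //= X s IH sD.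
have := gD X; rewrite sD ?mem_head //; case: (g X) => //= i Xi.
by apply/andP; split; last by apply: IH => Y Ys; apply: sD; rewrite inE Ys orbT.
Qed.

Lemma qcount_rel_false_add_true q (R : rv S) :
  vT S != vF S -> valid_db db -> isRel R.1 -> wf_rv R ->
  qcount db (q ++ [:: (R, vF S)]) + qcount db (q ++ [:: (R, vT S)]) =
  #|[set g | grounds (fun X => X \in occ (map fst q ++ [:: R])) g && sat q g]|.
Proof.
move=> TF [db_range _] /andP[/eqP predR _] wfR.
have RF_split b : qcount db (q ++ [:: (R, b)]) =
    #|[set g in [set g | grounds (fun X => X \in occ (map fst q ++ [:: R])) g && sat q g]
       | eval_rv db g R == b]|.
  by rewrite qcountE; apply: eq_card => g; rewrite !inE map_cat sat_cat /= andbT andbA.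
rewrite !RF_split card_two_valued 1?eq_sym // => g; rewrite inE => /andP[gR _].
have: eval_rv db g R \in range R.1.
  apply: db_range; apply: (typed_pmap_grounds wfR _ gR) => X XR.
  by rewrite occ_cat mem_cat /occ /= cats0 XR orbT.
by rewrite predR !inE orbC.
Qed.

End Queries.

Section RelationshipCounts.
Variables (S : schema) (db : Fn S -> seq (Ind S) -> Val S) (R : rv S) (Rs Vars : seq (rv S)).
Hypothesis oneAtts_neq0 : forall X : FOV S, oneAtts X != [::].
Hypothesis oneAtts_sub_Vars :
  forall X, X \in R.2 -> X \in occ Vars -> {subset oneAtts X <= Vars}.
Hypothesis occ_Rs_sub_Vars : forall X, X \in R.2 -> X \in occ Rs -> X \in occ Vars.

Local Notation Xs := (undup [seq X <- R.2 | X \notin occ Vars]).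
Local Notation prodXs := (cross_list (ct db Vars (condT Rs)) [seq ctX db X | X <- Xs]).
Local Notation grounds := (pfun_on (@in_pop S)).

Lemma mem_Xs X : (X \in Xs) = (X \in R.2) && (X \notin occ Vars).
Proof. by rewrite mem_undup mem_filter andbC. Qed.

Lemma cross_list_defined_Xs :
  cross_list_defined (ct db Vars (condT Rs)) [seq ctX db X | X <- Xs].
Proof.
apply: cross_list_defined_ctX; first exact: undup_uniq.
move=> v Y vVars; rewrite mem_Xs => /andP[_]; apply: contraNN => vY.
by apply/occP; exists v; rewrite // (mem_oneAtts vY) mem_head.
Qed.

Lemma tcols_cross_Xs : tcols prodXs =i Vars ++ oneAttsR R.
Proof.
move=> v; rewrite tcols_cross_list -map_comp !mem_cat /=.
case vVars: (v \in Vars) => //=.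
apply/flatten_mapP/flatten_mapP => [[X /[!mem_Xs] /andP[XR _] vX]|[X XR vX]].
  by exists X.
exists X => //; rewrite mem_Xs XR; apply: contraFN vVars => XVars.
exact: (oneAtts_sub_Vars XR XVars).
Qed.

Lemma sat_row_oneAttsR a g : sat db (row a Vars) g ->
  sat db (row a (oneAttsR R)) g = all (fun Y => sat db (row a (oneAtts Y)) g) Xs.
Proof.
move=> gVars; rewrite sat_row_flatten all_map.
apply/allP/allP => [gR Y /[!mem_Xs] /andP[YR _]|gXs Y YR]; first exact: gR.
case: (boolP (Y \in occ Vars)) => [YVars|YVars]; last by apply: gXs; rewrite mem_Xs YR.
rewrite /= sat_rowE; apply/allP => v /(oneAtts_sub_Vars YR YVars).
by move: gVars; rewrite sat_rowE => /allP; apply.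
Qed.

Lemma tcnt_ctX_grounds a X :
  tcnt (ctX db X) a = #|[set g | grounds (pred1 X) g && sat db (row a (oneAtts X)) g]|.
Proof.
rewrite tcnt_ct qcountE cats0 map_fst_row; apply: eq_card => g; rewrite !inE.
by rewrite (@eq_pfun_on _ _ _ _ (pred1 X)) // => Z; rewrite /= occ_oneAtts.
Qed.

Lemma card_R_unconstrained a :
  let q := row a (Vars ++ oneAttsR R) ++ condT Rs in
  #|[set g | grounds (fun X => X \in occ (map fst q ++ [:: R])) g && sat db q g]| =
  tcnt prodXs a.
Proof.
rewrite tcnt_cross_list big_map (eq_bigr _ (fun X _ => tcnt_ctX_grounds a X)).
rewrite tcnt_ct qcountE /= condT_row.
rewrite -card_pfun_on_cat; first last.
- move=> Y; apply: (@local_sub _ _ (fun X => X \in occ (map fst (row a (oneAtts Y))))).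
    by move=> Z; rewrite map_fst_row /= occ_oneAtts.
  exact: sat_local.
- exact: sat_local.
- move=> Y; rewrite mem_Xs map_cat !map_fst_row occ_cat mem_cat.
  by case/andP=> YR YVars; rewrite negb_or YVars; exact: contra (occ_Rs_sub_Vars YR) YVars.
- exact: undup_uniq.
apply: eq_card => g; rewrite !inE !map_cat !map_fst_row row_cat !sat_cat -!andbA.
congr andb.
  apply: eq_pfun_on => X; rewrite /= !occ_cat !mem_cat occ_oneAttsR // mem_Xs.
  by case: (X \in occ Vars); case: (X \in R.2); case: (X \in occ Rs); rewrite ?orbT ?orbF.
case: (boolP (sat db (row a Vars) g)) => //= gVars.
by rewrite sat_row_oneAttsR // andbC.
Qed.

Hypothesis vT_neq_vF : vT S != vF S.
Hypothesis db_valid : valid_db db.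
Hypothesis R_rel : isRel R.1.
Hypothesis R_wf : wf_rv R.

Lemma tcnt_ct_R_false_add_true a :
  tcnt (ct db (Vars ++ oneAttsR R) (condT Rs ++ [:: (R, vF S)])) a +
  tcnt (ct db (Vars ++ oneAttsR R) (condT Rs ++ [:: (R, vT S)])) a = tcnt prodXs a.
Proof. by rewrite !tcnt_ct !catA qcount_rel_false_add_true // (card_R_unconstrained a). Qed.

End RelationshipCounts.

Theorem proposition1 (S : schema) (db : Fn S -> seq (Ind S) -> Val S)
    (R : rv S) (Rs : seq (rv S)) (Vars : seq (rv S)) :
  wf_schema S -> valid_db db ->
  (* R is a (binary) relationship variable, Rs a set of relationship variables *)
  isRel R.1 -> wf_rv R ->
  (forall r, r \in Rs -> isRel r.1 /\ wf_rv r) ->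
  (* Vars is a set of random variables containing neither R nor 2Atts(R) *)
  (forall v, v \in Vars -> wf_rv v) ->
  R \notin Vars ->
  (forall v, v \in twoAtts R -> v \notin Vars) ->
  (* every first-order variable has at least one unary attribute *)
  (forall X : FOV S, oneAtts X != [::]) ->
  (* implicit well-formedness of the equation *)
  (forall X, X \in R.2 -> X \in occ Vars -> {subset oneAtts X <= Vars}) ->
  (forall X, X \in R.2 -> X \in occ Rs -> X \in occ Vars) ->
  let Xs := undup [seq X <- R.2 | X \notin occ Vars] in
  let lhs := ct db (Vars ++ oneAttsR R) (condT Rs ++ [:: (R, vF S)]) in
  let prod := cross_list (ct db Vars (condT Rs)) [seq ctX db X | X <- Xs] in
  let sub := ct db (Vars ++ oneAttsR R) (condT Rs ++ [:: (R, vT S)]) in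
  [/\ cross_list_defined (ct db Vars (condT Rs)) [seq ctX db X | X <- Xs],
      diff_defined prod sub &
      table_eq lhs (ct_diff prod sub)].
Proof.
(* The identity holds without the hypotheses that the Rs are relationships and
   that Vars is well formed and avoids R and 2Atts(R). *)
move=> [TF _ _ _] valid relR wfR _ _ _ _ neq0 subVars RsVars Xs lhs prod sub.
have count a : tcnt lhs a + tcnt sub a = tcnt prod a by exact: tcnt_ct_R_false_add_true.
have cols : tcols prod =i tcols sub by exact: tcols_cross_Xs.
split; first exact: cross_list_defined_Xs.
  by split=> // a; rewrite -count leq_addl.
by split=> [v|a]; rewrite ?cols // /= -count addnK.
Qed.
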